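(* Let $V\subseteq\mathcal V$ be finite and $\mathbb E,\mathbb F\in\mathit{NProg}(V)$. Then: (1) $\mathbb E\le_P^p\mathbb F$ iff $\bigvee_{\mathcal F\in\mathbb F}\mathrm{span}(\mathcal F)\subseteq\bigvee_{\mathcal E\in\mathbb E}\mathrm{span}(\mathcal E)$; (2) $\mathbb E\le_T^p\mathbb F$ iff $T_{\mathbb E}\sqsubseteq T_{\mathbb F}$ and $\bigvee_{\mathcal F\in\mathbb F}\mathrm{span}(\mathcal F\circ\mathcal P_{T_{\mathbb E}})\subseteq\bigvee_{\mathcal E\in\mathbb E}\mathrm{span}(\mathcal E\circ\mathcal P_{T_{\mathbb E}})$; (3) if both $\mathbb E$ and $\mathbb F$ contain only trace-preserving super-operators, then $\mathbb E\le_T^p\mathbb F$ iff $\mathbb E\le_P^p\mathbb F$.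
   Context: $\mathcal V$ is a countably infinite set of quantum variables, each with state space $\mathbb C^2$; for finite $V$, $\mathcal H_V=\bigotimes_{q\in V}\mathcal H_q$. $\mathcal D(\mathcal H)$: partial density operators; $\mathcal S(\mathcal H)$: projectors, identified with their image subspaces, $\sqsubseteq$ being inclusion. $\mathit{DProg}(V)$: completely positive trace-nonincreasing super-operators on $\mathcal L(\mathcal H_V)$; $\mathit{NProg}(V)$: nonempty, convex, closed subsets of $\mathit{DProg}(V)$. Operators/super-operators on subsystems are implicitly extended by tensoring with identities. For finite $W$ and $P,Q\in\mathcal S(\mathcal H_W)$: $\mathbb E\models_{tot}(\{P\},\{Q\})$ iff for every finite $X\supseteq V\cup W$ and $\rho\in\mathcal D(\mathcal H_X)$, ${\rm tr}(P\rho)\le\inf_{\mathcal E\in\mathbb E}{\rm tr}(Q\mathcal E(\rho))$; $\mathbb E\models_{par}(\{P\},\{Q\})$ iff for all such $X,\rho$, ${\rm tr}(P\rho)\le\inf_{\mathcal E\in\mathbb E}[{\rm tr}(Q\mathcal E(\rho))+{\rm tr}(\rho)-{\rm tr}(\mathcal E(\rho))]$. $\mathbb E\le_T^p\mathbb F$ iff for every finite $W$ and all $P,Q\in\mathcal S(\mathcal H_W)$, $\mathbb E\models_{tot}(\{P\},\{Q\})$ implies $\mathbb F\models_{tot}(\{P\},\{Q\})$; $\le_P^p$ likewise with $\models_{par}$. For a completely positive $\mathcal G(A)=\sum_iG_iAG_i^\dagger$, $\mathrm{span}(\mathcal G)$ is the linear span of the Kraus operators $\{G_i\}$ in $\mathcal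 L(\mathcal H_V)$ (independent of representation); $\bigvee$ of such spans denotes the smallest subspace of $\mathcal L(\mathcal H_V)$ containing them. For $\mathcal E\in\mathit{DProg}(V)$, $T_{\mathcal E}=\{|\psi\rangle:{\rm tr}(\mathcal E(|\psi\rangle\langle\psi|))={\rm tr}(|\psi\rangle\langle\psi|)\}$, and $T_{\mathbb E}=\bigcap_{\mathcal E\in\mathbb E}T_{\mathcal E}$ (a subspace, identified with its projector). $\mathcal P_{T}$ denotes the super-operator $\rho\mapsto T\rho T$. *)

From HB Require Import structures.
From mathcomp Require Import all_boot all_order all_algebra.
From mathcomp Require Import finmap.
From mathcomp Require Import complex.
From mathcomp Require Import reals.

Set Implicit Arguments.
Unset Strict Implicit.
Unset Printing Implicit Defensive.

Import Order.TTheory GRing.Theory Num.Theory.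
Local Open Scope ring_scope.
Local Open Scope complex_scope.

(* Quantum variables: the countably infinite set nat; each has state space C^2,
   with computational basis indexed by bool.  For a finite set X of variables,
   H_X = tensor_{q in X} C^2 has orthonormal basis indexed by the
   assignments X -> bool. Operators on H_X are square matrices indexed by
   (the enumeration of) these assignments. *)

Section Quantum.
Variable R : realType.
Local Notation C := (R[i]).

Definition basis (X : {fset nat}) := {ffun X -> bool}.
Definition dim (X : {fset nat}) := #|basis X|.
Definition op (X : {fset nat}) := 'M[C]_(dim X).
Definition ket (X : {fset nat}) := 'cV[C]_(dim X).

Definition dag m n (A : 'M[C]_(m, n)) : 'M[C]_(n, m) := (map_mx Num.conj A)^T.

Definition ent X (A : op X) (s t : basis X) : C := A (enum_rank s) (enum_rank t).
Definition mkop X (f : basis X -> basis X -> C) : op X :=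
  \matrix_(i, j) f (enum_val i) (enum_val j).

(* total view of an assignment (variables outside X are mapped to false) *)
Definition asg X (s : basis X) (n : nat) : bool :=
  if (insub n : option X) is Some x then s x else false.
(* restriction of an assignment of X to V (meaningful when V `<=` X) *)
Definition restr (V X : {fset nat}) (s : basis X) : basis V := [ffun v : V => asg s (val v)].
Definition agree_out (V X : {fset nat}) (s t : basis X) : bool :=
  [forall x : X, (val x \in V) || (s x == t x)].
Definition merge (V X : {fset nat}) (u : basis V) (r : basis X) : basis X :=
  [ffun x : X => if (insub (val x) : option V) is Some v then u v else r x].

(* cylindrical extension A (x) I of an operator on H_V to H_X (V `<=` X) *)
Definition ext (V X : {fset nat}) (A : op V) : op X :=
  mkop (fun s t => if agree_out V s t then ent A (restr V s) (restr V t) else 0).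

Definition sop V := op V -> op V.

(* extension E (x) id of a super-operator on L(H_V) to L(H_X) (V `<=` X):
   writing A = sum_{r,r'} A_{r r'} (x) |r><r'| (r, r' assignments of X \ V),
   (E (x) id)(A) = sum_{r,r'} E(A_{r r'}) (x) |r><r'|. *)
Definition block (V X : {fset nat}) (A : op X) (s t : basis X) : op V :=
  mkop (fun u u' => ent A (merge u s) (merge u' t)).
Definition ext_sop (V X : {fset nat}) (E : sop V) : op X -> op X :=
  fun A => mkop (fun s t => ent (E (block V A s t)) (restr V s) (restr V t)).

Definition psd n (A : 'M[C]_n) : Prop :=
  forall v : 'cV[C]_n, 0 <= (dag v *m A *m v) 0 0.
Definition is_pdens n (rho : 'M[C]_n) : Prop := psd rho /\ \tr rho <= 1.
Definition is_proj n (P : 'M[C]_n) : Prop := P *m P = P /\ dag P = P.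

Definition kraus_of V (E : sop V) (Ks : seq (op V)) : Prop :=
  forall A, E A = \sum_(K <- Ks) K *m A *m dag K.
Definition is_CP V (E : sop V) : Prop := exists Ks, kraus_of E Ks.
Definition trace_nonincr V (E : sop V) : Prop :=
  forall rho : op V, psd rho -> \tr (E rho) <= \tr rho.
Definition trace_pres V (E : sop V) : Prop :=
  forall rho : op V, \tr (E rho) = \tr rho.

Definition DProg V (E : sop V) : Prop := is_CP E /\ trace_nonincr E.

Definition convex_sops V (EE : sop V -> Prop) : Prop :=
  forall (E1 E2 : sop V) (l : R), EE E1 -> EE E2 -> 0 <= l <= 1 ->
    EE (fun A => l%:C *: E1 A + (1 - l)%:C *: E2 A).
Definition closed_sops V (EE : sop V -> Prop) : Prop :=
  forall (Es : nat -> sop V) (E : sop V), (forall n, EE (Es n)) ->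
    (forall A i j (eps : R), 0 < eps ->
       exists N, forall n, (N <= n)%N -> `|Es n A i j - E A i j| < eps%:C) ->
    EE E.
Definition NProg V (EE : sop V -> Prop) : Prop :=
  [/\ exists E, EE E, (forall E, EE E -> DProg E), convex_sops EE & closed_sops EE].

(* satisfaction of total / partial correctness of ({P},{Q}); the infimum over
   E in EE is unfolded as "for every E in EE" *)
Definition tot_sat V W (EE : sop V -> Prop) (P Q : op W) : Prop :=
  forall X : {fset nat}, (V `|` W `<=` X)%fset -> forall rho : op X, is_pdens rho ->
    forall E, EE E ->
      \tr (@ext W X P *m rho) <= \tr (@ext W X Q *m @ext_sop V X E rho).
Definition par_sat V W (EE : sop V -> Prop) (P Q : op W) : Prop :=
  forall X : {fset nat}, (V `|` W `<=` X)%fset -> forall rho : op X, is_pdens rho ->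
    forall E, EE E ->
      \tr (@ext W X P *m rho) <=
        \tr (@ext W X Q *m @ext_sop V X E rho) + \tr rho - \tr (@ext_sop V X E rho).

Definition refT V (EE FF : sop V -> Prop) : Prop :=
  forall (W : {fset nat}) (P Q : op W), is_proj P -> is_proj Q ->
    tot_sat EE P Q -> tot_sat FF P Q.
Definition refP V (EE FF : sop V -> Prop) : Prop :=
  forall (W : {fset nat}) (P Q : op W), is_proj P -> is_proj Q ->
    par_sat EE P Q -> par_sat FF P Q.

Definition lin_span V (S : op V -> Prop) (A : op V) : Prop :=
  exists cs : seq (C * op V), (forall p, p \in cs -> S p.2) /\
    A = \sum_(p <- cs) p.1 *: p.2.
(* span(G): linear span of the Kraus operators of G (independent of the
   chosen Kraus representation) *)
Definition kraus_span V (G : sop V) (A : op V) : Prop :=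
  exists Ks, kraus_of G Ks /\ lin_span (fun B => B \in Ks) A.
Definition join_span V (GG : sop V -> Prop) : op V -> Prop :=
  lin_span (fun B => exists G, GG G /\ kraus_span G B).

Definition T_of V (E : sop V) (psi : ket V) : Prop :=
  \tr (E (psi *m dag psi)) = \tr (psi *m dag psi).
Definition T_set V (EE : sop V -> Prop) (psi : ket V) : Prop :=
  forall E, EE E -> T_of E psi.

Definition comp_proj V (GG : sop V -> Prop) (T : op V) : sop V -> Prop :=
  fun G' => exists G, GG G /\ G' = (fun A => G (T *m A *m T)).

End Quantum.

(* Everything reduces to Kraus operators. For projectors P, Q and E = sum_K K . K^dag
   trace-nonincreasing, E satisfies the partial correctness formula ({P},{Q}) on all
   inputs iff every K maps the range of P into the range of Q, i.e. (1 - Q) K P = 0;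
   total correctness additionally requires the defect 1 - sum_K K^dag K to vanish on the
   range of P. Both conditions survive the cylindrical extension to larger registers and
   are linear in K, so they pass from the Kraus operators of EE to their span: this gives
   the "if" directions. For "only if", enlarge V by a disjoint copy V' and take the
   maximally entangled vector psi; A |-> (A (x) I) psi is injective. With P projecting
   onto psi and Q onto {(A (x) I) psi | A in the span for EE}, EE satisfies ({P},{Q}),
   and a Kraus operator B of FF does only if B lies in that span. For total correctness
   the same argument runs after precomposing with P_{T_EE}, the projector onto the common
   kernel of the defects of EE; the inclusion T_EE <= T_FF is read off from ({psi},{I}). *)

From Pilot Require Import Defs.
From HB Require Import structures.
From mathcomp Require Import all_boot all_order all_algebra.
From mathcomp Require Import finmap complex reals ring zify.
From Stdlib Require Import Classical FunctionalExtensionality.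

Set Implicit Arguments.
Unset Strict Implicit.
Unset Printing Implicit Defensive.

Import Order.TTheory GRing.Theory Num.Theory.
Local Open Scope ring_scope.

Section Quantum.
Variable R : realType.
Local Notation C := (R[i]).

(** * Coordinates on [H_X] *)

Section Entries.
Variable X : {fset nat}.
Implicit Types (A B : op R X) (s t u : basis X) (v : ket R X).

Lemma sum_basis (F : 'I_(Defs.dim X) -> C) : \sum_i F i = \sum_s F (enum_rank s).
Proof. by rewrite (reindex (@enum_rank _)) //; apply: onW_bij; exact: enum_rank_bij. Qed.

Lemma ent_mkop (f : basis X -> basis X -> C) s t : ent (mkop f) s t = f s t.
Proof. by rewrite /ent /mkop mxE !enum_rankK. Qed.

Lemma opP A B : (forall s t, ent A s t = ent B s t) -> A = B.
Proof.
move=> eqAB; apply/matrixP => i j.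
by have := eqAB (enum_val i) (enum_val j); rewrite /ent !enum_valK.
Qed.

Lemma ent_mulmx A B s t : ent (A *m B) s t = \sum_u ent A s u * ent B u t.
Proof. by rewrite /ent mxE sum_basis. Qed.

Lemma ent_dag A s t : ent (dag A) s t = (ent A t s)^*.
Proof. by rewrite /ent /dag !mxE. Qed.

Lemma entD A B s t : ent (A + B) s t = ent A s t + ent B s t.
Proof. by rewrite /ent mxE. Qed.

Lemma entZ c A s t : ent (c *: A) s t = c * ent A s t.
Proof. by rewrite /ent mxE. Qed.

Lemma ent1 s t : ent (1%:M : op R X) s t = (s == t)%:R.
Proof. by rewrite /ent mxE (inj_eq enum_rank_inj). Qed.

Lemma ent_sum I (r : seq I) (P : pred I) (F : I -> op R X) s t :
  ent (\sum_(i <- r | P i) F i) s t = \sum_(i <- r | P i) ent (F i) s t.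
Proof. by rewrite /ent summxE. Qed.

Lemma mxtrace_ent A : \tr A = \sum_s ent A s s.
Proof. by rewrite /mxtrace sum_basis. Qed.

Definition kent v s : C := v (enum_rank s) 0.
Definition mkket (f : basis X -> C) : ket R X := \col_i f (enum_val i).

Lemma kent_mkket (f : basis X -> C) s : kent (mkket f) s = f s.
Proof. by rewrite /kent /mkket mxE enum_rankK. Qed.

Lemma ketP (v w : ket R X) : (forall s, kent v s = kent w s) -> v = w.
Proof.
move=> eqvw; apply/matrixP => i j; rewrite (ord1 j).
by have := eqvw (enum_val i); rewrite /kent !enum_valK.
Qed.

Lemma kent_mulmx A v s : kent (A *m v) s = \sum_u ent A s u * kent v u.
Proof. by rewrite /kent mxE sum_basis. Qed.

Lemma kent0 s : kent 0 s = 0.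
Proof. by rewrite /kent mxE. Qed.

Lemma qform_ent A v :
  (dag v *m A *m v) 0 0 = \sum_t \sum_s (kent v s)^* * ent A s t * kent v t.
Proof.
rewrite mxE sum_basis; apply: eq_bigr => t _; rewrite mxE sum_basis mulr_suml.
by apply: eq_bigr => s _; rewrite /dag !mxE.
Qed.

End Entries.

Lemma asg_val X (s : basis X) (x : X) : asg s (val x) = s x.
Proof. by rewrite /asg valK. Qed.

Lemma asg_out X (s : basis X) n : n \notin X -> asg s n = false.
Proof. by move=> nX; rewrite /asg insubN. Qed.

Lemma asg_inj X (s t : basis X) : asg s =1 asg t -> s = t.
Proof. by move=> eq_st; apply/ffunP => x; rewrite -!asg_val. Qed.

Lemma asg_restr V X (s : basis X) n :
  asg (restr V s) n = if n \in V then asg s n else false.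
Proof.
case: (boolP (n \in V)) => nV; last by rewrite asg_out.
by rewrite -[n]/(val (FSetSub nV)) asg_val /restr ffunE.
Qed.

Lemma agree_outP V X (s t : basis X) :
  reflect (forall n, n \notin V -> asg s n = asg t n) (agree_out V s t).
Proof.
apply: (iffP forallP) => [agree n nV|eq_out x].
  case: (boolP (n \in X)) => nX; last by rewrite !asg_out.
  have := agree (FSetSub nX); rewrite /= (negbTE nV) => /eqP eq_n.
  by rewrite -[n]/(val (FSetSub nX)) !asg_val.
by case: (boolP (val x \in V)) => //= nV; rewrite -!asg_val eq_out.
Qed.

Section Assignments.
Variables (V X : {fset nat}).
Hypothesis VX : (V `<=` X)%fset.
Implicit Types (u : basis V) (r s t : basis X).

Lemma asg_merge u r n : asg (Defs.merge u r) n = if n \in V then asg u n else asg r n.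
Proof.
case: (boolP (n \in X)) => nX; last first.
  have nV : n \notin V by apply: contra nX; apply: (fsubsetP VX).
  by rewrite (negbTE nV) !asg_out.
rewrite -[n]/(val (FSetSub nX)) asg_val /Defs.merge ffunE asg_val /=.
case: (boolP (n \in V)) => nV; first by rewrite insubT /= -(asg_val u (FSetSub nV)).
by rewrite insubN.
Qed.

Lemma restr_merge u r : restr V (Defs.merge u r) = u.
Proof.
apply: asg_inj => n; rewrite asg_restr asg_merge.
by case: (boolP (n \in V)) => // nV; rewrite asg_out.
Qed.

Lemma merge_restr t : Defs.merge (restr V t) t = t.
Proof. by apply: asg_inj => n; rewrite asg_merge asg_restr; case: (n \in V). Qed.

Lemma merge_merge u u' r : Defs.merge u (Defs.merge u' r) = Defs.merge u r.
Proof. by apply: asg_inj => n; rewrite !asg_merge; case: (n \in V). Qed.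

Lemma agree_merge u r : agree_out V r (Defs.merge u r).
Proof. by apply/agree_outP => n nV; rewrite asg_merge (negbTE nV). Qed.

Lemma agree_refl t : agree_out V t t.
Proof. exact/agree_outP. Qed.

Lemma agree_sym s t : agree_out V s t = agree_out V t s.
Proof. by apply/agree_outP/agree_outP => eq_out n nV; rewrite eq_out. Qed.

Lemma agree_trans s t r : agree_out V s t -> agree_out V t r -> agree_out V s r.
Proof.
move=> /agree_outP eq1 /agree_outP eq2.
by apply/agree_outP => n nV; rewrite eq1 ?eq2.
Qed.

Lemma merge_agree u s t : agree_out V s t -> Defs.merge u s = Defs.merge u t.
Proof.
move=> /agree_outP eq_out; apply: asg_inj => n; rewrite !asg_merge.
by case: (boolP (n \in V)) => // /eq_out.
Qed.

Lemma agree_mergel u s t : agree_out V (Defs.merge u s) t = agree_out V s t.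
Proof.
apply/idP/idP => agree; first exact: agree_trans (agree_merge u s) agree.
by apply: agree_trans agree; rewrite agree_sym agree_merge.
Qed.

Lemma eq_agree_restr s t : (s == t) = agree_out V s t && (restr V s == restr V t).
Proof.
apply/eqP/andP => [->|[agree /eqP eq_restr]]; first by rewrite agree_refl.
by rewrite -(merge_restr s) -(merge_restr t) eq_restr (merge_agree _ agree).
Qed.

Lemma sum_agree_out r (f : basis X -> C) :
  \sum_t (if agree_out V r t then f t else 0) = \sum_(u : basis V) f (Defs.merge u r).
Proof.
rewrite -big_mkcond (reindex_onto (fun u : basis V => Defs.merge u r) (@restr V X)) /=.
  by apply: eq_bigl => u; rewrite agree_merge restr_merge eqxx.
by move=> t agree; rewrite (merge_agree _ agree) merge_restr.
Qed.

Lemma sum_agree_out_restr r (f : basis X -> basis V -> C) :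
  \sum_t (if agree_out V r t then f t (restr V t) else 0) =
  \sum_(u : basis V) f (Defs.merge u r) u.
Proof. by rewrite sum_agree_out; apply: eq_bigr => u _; rewrite restr_merge. Qed.

Definition class_rep t := Defs.merge ([ffun => false] : basis V) t.

Lemma sum_by_agree_classes (f : basis X -> C) :
  \sum_t f t = \sum_(r | class_rep r == r) \sum_(u : basis V) f (Defs.merge u r).
Proof.
rewrite (partition_big class_rep (fun r => class_rep r == r)) /=; last first.
  by move=> t _; rewrite /class_rep merge_merge.
apply: eq_bigr => r /eqP rep_r; rewrite -sum_agree_out -big_mkcond.
apply: eq_bigl => t; apply/eqP/idP => [eq_rep|agree].
  apply: agree_trans (agree_merge [ffun => false] r) _.
  by rewrite -/(class_rep r) rep_r -eq_rep agree_sym agree_merge.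
by rewrite -rep_r /class_rep; apply: merge_agree; rewrite agree_sym.
Qed.

End Assignments.

(** * Cylindrical extension *)

Lemma ent_ext V X (A : op R V) s t :
  ent (ext X A) s t = if agree_out V s t then ent A (restr V s) (restr V t) else 0.
Proof. exact: ent_mkop. Qed.

Lemma ext_is_linear V X : linear (@ext R V X).
Proof.
move=> c A B; apply: opP => s t; rewrite entD entZ !ent_ext entD entZ.
by case: ifP; rewrite ?mulr0 ?addr0.
Qed.

HB.instance Definition _ V X :=
  GRing.isLinear.Build _ _ _ _ (@ext R V X) (@ext_is_linear V X).

Lemma ext_dag V X (A : op R V) : ext X (dag A) = dag (ext X A).
Proof.
apply: opP => s t; rewrite ent_dag !ent_ext ent_dag agree_sym.
by case: ifP; rewrite ?conjC0.
Qed.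

Section Extension.
Variables (V X : {fset nat}).
Hypothesis VX : (V `<=` X)%fset.
Implicit Types (A B : op R V) (s t : basis X).

Lemma sum_ent_extl s A (g : basis X -> C) :
  \sum_t ent (ext X A) s t * g t = \sum_(u : basis V) ent A (restr V s) u * g (Defs.merge u s).
Proof.
rewrite -(sum_agree_out_restr VX s (fun t u => ent A (restr V s) u * g t)).
by apply: eq_bigr => t _; rewrite ent_ext; case: ifP; rewrite ?mul0r.
Qed.

Lemma sum_ent_extr t A (g : basis X -> C) :
  \sum_s g s * ent (ext X A) s t = \sum_(u : basis V) g (Defs.merge u t) * ent A u (restr V t).
Proof.
rewrite -(sum_agree_out_restr VX t (fun s u => g s * ent A u (restr V t))).
by apply: eq_bigr => s _; rewrite ent_ext agree_sym; case: ifP; rewrite ?mulr0.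
Qed.

Lemma ext_mulmx A B : ext X (A *m B) = ext X A *m ext X B.
Proof.
apply: opP => s t; rewrite ent_mulmx sum_ent_extl ent_ext.
under eq_bigr => u _ do rewrite ent_ext (agree_mergel VX) (restr_merge VX).
case: ifP => _; last by rewrite big1 // => u _; rewrite mulr0.
by rewrite ent_mulmx.
Qed.

Lemma ext1 : ext X (1%:M : op R V) = 1%:M.
Proof. by apply: opP => s t; rewrite ent_ext !ent1 (eq_agree_restr VX); case: ifP. Qed.

Lemma ext_sop_kraus (E : sop R V) Ks (rho : op R X) : kraus_of E Ks ->
  ext_sop E rho = \sum_(K <- Ks) ext X K *m rho *m dag (ext X K).
Proof.
move=> EKs; apply: opP => s t; rewrite /ext_sop ent_mkop EKs !ent_sum.
apply: eq_bigr => K _; rewrite -ext_dag !ent_mulmx sum_ent_extr.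
apply: eq_bigr => u' _; rewrite !ent_mulmx sum_ent_extl; congr (_ * _).
by apply: eq_bigr => u _; rewrite /block ent_mkop.
Qed.

Definition slice (r : basis X) (v : ket R X) : ket R V :=
  mkket (fun u => kent v (Defs.merge u r)).

Lemma slice_ext r A v : slice r (ext X A *m v) = A *m slice r v.
Proof.
apply: ketP => u; rewrite kent_mkket !kent_mulmx sum_ent_extl (restr_merge VX).
by apply: eq_bigr => w _; rewrite (merge_merge VX) kent_mkket.
Qed.

Lemma slice0 r : slice r 0 = 0.
Proof. by apply: ketP => u; rewrite kent_mkket !kent0. Qed.

Lemma slice_inj (v w : ket R X) : (forall r, slice r v = slice r w) -> v = w.
Proof.
move=> eq_slices; apply: ketP => t.
have := congr1 (fun z => kent z (restr V t)) (eq_slices t).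
by rewrite !kent_mkket (merge_restr VX).
Qed.

Lemma block_merge (sig : op R X) (u u' : basis V) r :
  block V sig (Defs.merge u r) (Defs.merge u' r) = block V sig r r.
Proof. by apply: opP => a b; rewrite /block !ent_mkop !(merge_merge VX). Qed.

Lemma psd_block (sig : op R X) r : psd sig -> psd (block V sig r r).
Proof.
move=> psd_sig v.
pose w : ket R X := mkket (fun t => if agree_out V r t then kent v (restr V t) else 0).
suff <- : (dag w *m sig *m w) 0 0 = (dag v *m block V sig r r *m v) 0 0 by [].
rewrite !qform_ent; transitivity (\sum_t
    if agree_out V r t then (\sum_s (kent w s)^* * ent sig s t) * kent v (restr V t) else 0).
  by apply: eq_bigr => t _; rewrite -mulr_suml kent_mkket; case: ifP; rewrite ?mulr0.
rewrite (sum_agree_out_restr VX r (fun t u => (\sum_s (kent w s)^* * ent sig s t) * kent v u)).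
apply: eq_bigr => u' _; rewrite -mulr_suml; congr (_ * _).
transitivity (\sum_s
    if agree_out V r s then (kent v (restr V s))^* * ent sig s (Defs.merge u' r) else 0).
  by apply: eq_bigr => s _; rewrite kent_mkket; case: ifP; rewrite ?conjC0 ?mul0r.
rewrite (sum_agree_out_restr VX r (fun s u => (kent v u)^* * ent sig s (Defs.merge u' r))).
by apply: eq_bigr => u _; rewrite /block ent_mkop.
Qed.

(* Along the classes of [agree_out V], the diagonal block of [ext_sop E sig] at [r] is
   [E] applied to the block of [sig] at [r]. *)
Lemma ext_sop_tr_le (E : sop R V) (sig : op R X) : trace_nonincr E -> psd sig ->
  \tr (ext_sop E sig) <= \tr sig.
Proof.
move=> tnE psd_sig; rewrite !mxtrace_ent (sum_by_agree_classes VX).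
rewrite [X in _ <= X](sum_by_agree_classes VX); apply: ler_sum => r _.
rewrite [X in _ <= X](_ : _ = \tr (block V sig r r)); last first.
  by rewrite mxtrace_ent; apply: eq_bigr => u _; rewrite /block ent_mkop.
rewrite [X in X <= _](_ : _ = \tr (E (block V sig r r))); first exact: tnE (psd_block r psd_sig).
rewrite mxtrace_ent; apply: eq_bigr => u _.
by rewrite /ext_sop ent_mkop (restr_merge VX) block_merge.
Qed.

End Extension.

Lemma ext_id V (A : op R V) : ext V A = A.
Proof.
have restr_id (s : basis V) : restr V s = s.
  by apply: asg_inj => n; rewrite asg_restr; case: (boolP (n \in V)) => // nV; rewrite asg_out.
apply: opP => s t; rewrite ent_ext !restr_id.
suff -> : agree_out V s t by [].
by apply/forallP => x; rewrite fsvalP.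
Qed.

Lemma ext_ext V W X (A : op R V) : (V `<=` W)%fset -> (W `<=` X)%fset ->
  ext X (ext W A) = ext X A.
Proof.
move=> VW WX; apply: opP => s t; rewrite !ent_ext.
have restr_restr (s' : basis X) : restr V (restr W s') = restr V s'.
  apply: asg_inj => n; rewrite !asg_restr.
  by case: (boolP (n \in V)) => // nV; rewrite (fsubsetP VW).
rewrite !restr_restr.
have -> : agree_out V s t = agree_out W s t && agree_out V (restr W s) (restr W t).
  apply/agree_outP/andP => [eq_out|[/agree_outP eqW /agree_outP eqV] n nV].
    split; apply/agree_outP => n nW; last by rewrite !asg_restr; case: ifP; rewrite ?eq_out.
    by apply: eq_out; apply: contra nW; apply: (fsubsetP VW).
  case: (boolP (n \in W)) => nW; last exact: eqW.
  by have := eqV n nV; rewrite !asg_restr nW.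
by case: (agree_out W s t).
Qed.

(** * Positive operators and projectors *)

Section Adjoint.
Variables m n p : nat.
Implicit Types (A B : 'M[C]_(m, n)).

Lemma dagD A B : dag (A + B) = dag A + dag B.
Proof. by apply/matrixP => i j; rewrite !mxE rmorphD. Qed.

Lemma dagB A B : dag (A - B) = dag A - dag B.
Proof. by apply/matrixP => i j; rewrite !mxE rmorphB. Qed.

Lemma dag_sum I (r : seq I) (P : pred I) (F : I -> 'M[C]_(m, n)) :
  dag (\sum_(i <- r | P i) F i) = \sum_(i <- r | P i) dag (F i).
Proof. by apply/matrixP => i j; rewrite !mxE !summxE rmorph_sum; apply: eq_bigr => k _; rewrite !mxE. Qed.

Lemma dagM A (B : 'M[C]_(n, p)) : dag (A *m B) = dag B *m dag A.
Proof. by rewrite /dag map_mxM trmx_mul. Qed.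

Lemma dagK A : dag (dag A) = A.
Proof. by apply/matrixP => i j; rewrite !mxE conjCK. Qed.

Lemma dagZ c A : dag (c *: A) = c^* *: dag A.
Proof. by apply/matrixP => i j; rewrite !mxE rmorphM. Qed.

End Adjoint.

Lemma mx11D (A B : 'M[C]_1) : (A + B) 0 0 = A 0 0 + B 0 0.
Proof. by rewrite mxE. Qed.

Lemma mx11B (A B : 'M[C]_1) : (A - B) 0 0 = A 0 0 - B 0 0.
Proof. by rewrite !mxE. Qed.

Lemma mx11Z c (A : 'M[C]_1) : (c *: A) 0 0 = c * A 0 0.
Proof. by rewrite mxE. Qed.

Lemma dag1 n : dag (1%:M : 'M[C]_n) = 1%:M.
Proof. by apply/matrixP => i j; rewrite !mxE eq_sym; case: eqP; rewrite ?conjC1 ?conjC0. Qed.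

Section Hilbert.
Variable n : nat.
Implicit Types (A M P Q S : 'M[C]_n) (v w x : 'cV[C]_n).

Definition sqnorm v : C := (dag v *m v) 0 0.
Definition qform A v : C := (dag v *m A *m v) 0 0.

Lemma sqnormE v : sqnorm v = \sum_i v i 0 * (v i 0)^*.
Proof. by rewrite /sqnorm mxE; apply: eq_bigr => i _; rewrite !mxE mulrC. Qed.

Lemma sqnorm_ge0 v : 0 <= sqnorm v.
Proof. by rewrite sqnormE; apply: sumr_ge0 => i _; exact: mul_conjC_ge0. Qed.

Lemma sqnorm_eq0 v : sqnorm v = 0 -> v = 0.
Proof.
rewrite sqnormE => /psumr_eq0P vanish; apply/matrixP => i j; rewrite (ord1 j) mxE.
by apply/eqP; rewrite -mul_conjC_eq0 vanish // => k _; exact: mul_conjC_ge0.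
Qed.

Lemma sqnorm0 : sqnorm (0 : 'cV[C]_n) = 0.
Proof. by rewrite /sqnorm mulmx0 mxE. Qed.

Lemma sqnorms_eq0 (I : eqType) (r : seq I) (f : I -> 'cV[C]_n) :
  \sum_(i <- r) sqnorm (f i) <= 0 -> forall i, i \in r -> f i = 0.
Proof.
move=> le0 i ir; apply: sqnorm_eq0.
have /eqP : \sum_(i <- r) sqnorm (f i) = 0.
  by apply/eqP; rewrite eq_le le0 sumr_ge0 // => j _; exact: sqnorm_ge0.
rewrite psumr_eq0 => [/allP /(_ i ir) /eqP //|j _]; exact: sqnorm_ge0.
Qed.

Lemma mxtrace_vdag v : \tr (v *m dag v) = sqnorm v.
Proof. by rewrite mxtrace_mulC /mxtrace big_ord1. Qed.

Lemma dag_vmul v : dag v *m v = (sqnorm v)%:M.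
Proof. by apply/matrixP => i j; rewrite (ord1 i) (ord1 j) [RHS]mxE mulr1n. Qed.

Lemma psd_mxtrace_ge0 A : psd A -> 0 <= \tr A.
Proof.
move=> psdA; apply: sumr_ge0 => i _.
have := psdA (delta_mx i 0).
have -> : dag (delta_mx i 0 : 'cV[C]_n) = delta_mx 0 i.
  by apply/matrixP => a b; rewrite !mxE (ord1 a) eqxx andbT; case: eqP; rewrite ?conjC1 ?conjC0.
by rewrite -rowE -colE !mxE.
Qed.

Lemma psd_conj (G : 'M[C]_n) S : psd S -> psd (G *m S *m dag G).
Proof. by move=> psdS v; have := psdS (dag G *m v); rewrite dagM dagK !mulmxA. Qed.

Lemma mxtrace_conj_ge0 (G : 'M[C]_n) S : psd S -> 0 <= \tr (G *m S *m dag G).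
Proof. by move=> psdS; apply: psd_mxtrace_ge0; apply: psd_conj. Qed.

Lemma psd_vdag v : psd (v *m dag v).
Proof.
move=> w; rewrite mulmxA -mulmxA.
have -> : dag v *m w = dag (dag w *m v) by rewrite dagM dagK.
by rewrite mxE big_ord1 /dag !mxE mul_conjC_ge0.
Qed.

Lemma psdZ c A : 0 <= c -> psd A -> psd (c *: A).
Proof. by move=> c_ge0 psdA v; rewrite -scalemxAr -scalemxAl mxE mulr_ge0. Qed.

Lemma psdD A M : psd A -> psd M -> psd (A + M).
Proof. by move=> psdA psdM v; rewrite mulmxDr mulmxDl mxE addr_ge0. Qed.

(* If [M >= 0] and [v^* M v = 0], then [t |-> (v + t M v)^* M (v + t M v)] is a
   nonnegative real quadratic with vanishing constant term and linear
   coefficient [2 |M v|^2], which forces [M v = 0]. *)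
Lemma psd_qform_eq0 M v : psd M -> dag M = M -> qform M v = 0 -> M *m v = 0.
Proof.
move=> psdM hermM qv0; set w := M *m v.
have vMw : dag v *m M *m w = dag w *m w by rewrite /w dagM hermM mulmxA.
set a := sqnorm w; set b := qform M w.
have a_ge0 : 0 <= a := sqnorm_ge0 w.
have b_ge0 : 0 <= b := psdM w.
have b1_gt0 : 0 < b + 1 by rewrite ltr_wpDl.
set k := (b + 1)^-1; have k_ge0 : 0 <= k by rewrite invr_ge0 ltW.
set t := - (a * k).
have t_real : t^* = t by rewrite /t rmorphN rmorphM /= (geC0_conj a_ge0) (geC0_conj k_ge0).
have := psdM (v + t *: w).
rewrite dagD dagZ !mulmxDl !mulmxDr -!scalemxAl -!scalemxAr !mx11D !mx11Z.
rewrite -/(qform M v) vMw -mulmxA -/w -/(sqnorm w) -/a -/(qform M w) -/b qv0 t_real.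
have -> : 0 + t * a + (t * a + t * (t * b)) = (a * a * k) * (k * b - 2) by rewrite /t; ring.
have kb_lt2 : k * b - 2 < 0.
  rewrite subr_lt0 (@le_lt_trans _ _ 1) ?ltr1n //.
  by rewrite mulrC ler_pdivrMr // mul1r lerDl ler01.
rewrite (nmulr_lge0 _ kb_lt2) => aak_le0.
have : a * a * k = 0 by apply/eqP; rewrite eq_le aak_le0 !mulr_ge0.
by move/eqP; rewrite !mulf_eq0 invr_eq0 (gt_eqF b1_gt0) orbF orbb => /eqP /sqnorm_eq0.
Qed.

Lemma is_proj1 : is_proj (1%:M : 'M[C]_n).
Proof. by split; rewrite ?mulmx1 ?dag1. Qed.

Lemma is_proj_compl Q : is_proj Q -> is_proj (1%:M - Q).
Proof.
case=> QQ hermQ; split; last by rewrite dagB dag1 hermQ.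
by rewrite mulmxBl mul1mx mulmxBr mulmx1 QQ subrr subr0.
Qed.

Lemma mxtrace_proj_conj Q M : is_proj Q -> \tr (Q *m M) = \tr (Q *m M *m dag Q).
Proof. by case=> QQ hermQ; rewrite hermQ -{1}QQ -mulmxA mxtrace_mulC. Qed.

Lemma mxtrace_proj_le Q S : is_proj Q -> psd S -> \tr (Q *m S) <= \tr S.
Proof.
move=> projQ psdS.
have -> : \tr S = \tr (Q *m S) + \tr ((1%:M - Q) *m S).
  by rewrite -mxtraceD -mulmxDl addrC subrK mul1mx.
by rewrite lerDl (mxtrace_proj_conj _ (is_proj_compl projQ)) mxtrace_conj_ge0.
Qed.

Lemma sqnorm_proj Q y : is_proj Q -> sqnorm (Q *m y) = qform Q y.
Proof. by case=> QQ hermQ; rewrite /sqnorm /qform dagM hermQ mulmxA -(mulmxA _ Q Q) QQ. Qed.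

Lemma sqnorm_proj_split Q y : is_proj Q ->
  sqnorm y = sqnorm (Q *m y) + sqnorm ((1%:M - Q) *m y).
Proof.
move=> projQ; rewrite !sqnorm_proj //; last exact: is_proj_compl.
by rewrite /qform mulmxBr mulmx1 mulmxBl mx11B addrC subrK.
Qed.

Lemma mulmx_compl_eq0 M x : (1%:M - M) *m x = 0 <-> M *m x = x.
Proof.
rewrite mulmxBl mul1mx; split => [/eqP|Mx]; last by rewrite Mx subrr.
by rewrite subr_eq0 => /eqP <-.
Qed.

Definition rank1_proj v := (sqnorm v)^-1 *: (v *m dag v).

Lemma rank1_projv v : rank1_proj v *m v = v.
Proof.
rewrite -scalemxAl -mulmxA dag_vmul mul_mx_scalar scalerA.
have [/sqnorm_eq0 ->|v_neq0] := eqVneq (sqnorm v) 0; first by rewrite scaler0.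
by rewrite mulVf // scale1r.
Qed.

Lemma is_proj_rank1 v : is_proj (rank1_proj v).
Proof.
split; first by rewrite -scalemxAr mulmxA rank1_projv.
by rewrite dagZ dagM dagK geC0_conj // invr_ge0 sqnorm_ge0.
Qed.

Lemma pdens_vdag v : is_pdens ((1 + sqnorm v)^-1 *: (v *m dag v)).
Proof.
have norm1_gt0 : 0 < 1 + sqnorm v by rewrite ltr_pwDl // sqnorm_ge0.
split; first by apply: psdZ; [rewrite invr_ge0 ltW | exact: psd_vdag].
by rewrite mxtraceZ mxtrace_vdag mulrC ler_pdivrMr // mul1r lerDr ler01.
Qed.

Lemma mx_colP m (A B : 'M[C]_(m, n)) : (forall x : 'cV_n, A *m x = B *m x) -> A = B.
Proof.
move=> eqAB; apply/matrixP => i j.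
by have := congr1 (fun M : 'cV[C]_m => M i 0) (eqAB (delta_mx j 0)); rewrite -!colE !mxE.
Qed.

Lemma mx_col0P m (A : 'M[C]_(m, n)) : (forall x : 'cV_n, A *m x = 0) -> A = 0.
Proof. by move=> A0; apply: mx_colP => x; rewrite A0 mul0mx. Qed.

End Hilbert.

(** * Kraus operators and correctness formulas *)

Section KrausOperators.
Variable n : nat.
Implicit Types (P Q M rho sig : 'M[C]_n) (K : 'M[C]_n) (Ks : seq 'M[C]_n) (x v : 'cV[C]_n).

Definition krausmap Ks rho := \sum_(K <- Ks) K *m rho *m dag K.
Definition kraus_tnonincr Ks := forall sig, psd sig -> \tr (krausmap Ks sig) <= \tr sig.
Definition defect Ks := 1%:M - \sum_(K <- Ks) dag K *m K.
Definition maps_into P Q K := (1%:M - Q) *m K *m P = 0.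

Lemma krausmapZ Ks c rho : krausmap Ks (c *: rho) = c *: krausmap Ks rho.
Proof.
rewrite /krausmap scaler_sumr; apply: eq_bigr => K _.
by rewrite -scalemxAr -scalemxAl.
Qed.

Lemma psd_krausmap Ks rho : psd rho -> psd (krausmap Ks rho).
Proof.
move=> psd_rho; apply: big_ind => [v||K _]; [|exact: psdD|exact: psd_conj].
by rewrite mulmx0 mul0mx mxE.
Qed.

Lemma mxtrace_conj_krausmap_vdag (Y : 'M[C]_n) Ks x :
  \tr (Y *m krausmap Ks (x *m dag x) *m dag Y) = \sum_(K <- Ks) sqnorm (Y *m K *m x).
Proof.
rewrite /krausmap mulmx_sumr mulmx_suml raddf_sum; apply: eq_bigr => K _.
by rewrite -mxtrace_vdag !dagM !mulmxA.
Qed.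

Lemma mxtrace_krausmap_vdag Ks x :
  \tr (krausmap Ks (x *m dag x)) = \sum_(K <- Ks) sqnorm (K *m x).
Proof.
have := mxtrace_conj_krausmap_vdag 1%:M Ks x; rewrite dag1 mul1mx mulmx1 => ->.
by under eq_bigr do rewrite mul1mx.
Qed.

Lemma mxtrace_proj_vdag P x : P *m x = x -> \tr (P *m (x *m dag x)) = sqnorm x.
Proof. by move=> Px; rewrite mulmxA Px mxtrace_vdag. Qed.

Lemma qform_defect Ks v : qform (defect Ks) v = sqnorm v - \tr (krausmap Ks (v *m dag v)).
Proof.
rewrite /qform /defect mulmxBr mulmx1 mulmxBl mx11B -/(sqnorm v) mxtrace_krausmap_vdag.
rewrite mulmx_sumr mulmx_suml summxE; congr (_ - _); apply: eq_bigr => K _.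
by rewrite /sqnorm dagM !mulmxA.
Qed.

Lemma defect_herm Ks : dag (defect Ks) = defect Ks.
Proof.
rewrite /defect dagB dag1 dag_sum; congr (_ - _); apply: eq_bigr => K _.
by rewrite dagM dagK.
Qed.

Lemma psd_defect Ks : kraus_tnonincr Ks -> psd (defect Ks).
Proof.
move=> tnKs v; rewrite -/(qform _ v) qform_defect subr_ge0 -mxtrace_vdag.
exact/tnKs/psd_vdag.
Qed.

Lemma defect_mulv_eq0 Ks v : kraus_tnonincr Ks ->
  defect Ks *m v = 0 <-> \tr (krausmap Ks (v *m dag v)) = \tr (v *m dag v).
Proof.
move=> tnKs; split => [Dv0|trace_eq].
  have : qform (defect Ks) v = 0 by rewrite /qform -mulmxA Dv0 mulmx0 mxE.
  by rewrite qform_defect mxtrace_vdag => /eqP; rewrite subr_eq0 => /eqP.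
apply: psd_qform_eq0; [exact: psd_defect | exact: defect_herm |].
by rewrite qform_defect trace_eq mxtrace_vdag subrr.
Qed.

Section Correctness.
Variables (P Q : 'M[C]_n) (Ks : seq 'M[C]_n).
Hypotheses (projP : is_proj P) (projQ : is_proj Q).

Let sqnorm_kraus_split x :
  \sum_(K <- Ks) sqnorm (K *m x) =
  \sum_(K <- Ks) sqnorm (Q *m K *m x) + \sum_(K <- Ks) sqnorm ((1%:M - Q) *m K *m x).
Proof. by rewrite -big_split; apply: eq_bigr => K _; rewrite (sqnorm_proj_split _ projQ) !mulmxA. Qed.

Lemma par_bound_maps_into :
  (forall rho, is_pdens rho ->
     \tr (P *m rho) <= \tr (Q *m krausmap Ks rho) + \tr rho - \tr (krausmap Ks rho)) ->
  forall K, K \in Ks -> maps_into P Q K.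
Proof.
move=> bound K KKs; apply: mx_col0P => v; rewrite -mulmxA.
set x := P *m v; have Px : P *m x = x by rewrite /x mulmxA; case: projP => ->.
have c_gt0 : 0 < (1 + sqnorm x)^-1 by rewrite invr_gt0 ltr_pwDl // sqnorm_ge0.
have := bound _ (pdens_vdag x).
rewrite krausmapZ -!scalemxAr !mxtraceZ mxtrace_proj_vdag // (mxtrace_proj_conj _ projQ).
rewrite mxtrace_conj_krausmap_vdag mxtrace_krausmap_vdag mxtrace_vdag sqnorm_kraus_split.
set c := (1 + sqnorm x)^-1; set a := \sum_(K <- Ks) _; set b := \sum_(K <- Ks) _.
rewrite (_ : c * a + c * sqnorm x - c * (a + b) = c * sqnorm x - c * b); last by ring.
rewrite lerBrDr gerDl pmulr_rle0 // => /sqnorms_eq0 /(_ K KKs).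
by rewrite -!mulmxA.
Qed.

Lemma maps_into_par_bound : kraus_tnonincr Ks ->
  (forall K, K \in Ks -> maps_into P Q K) ->
  forall rho, psd rho ->
    \tr (P *m rho) <= \tr (Q *m krausmap Ks rho) + \tr rho - \tr (krausmap Ks rho).
Proof.
move=> tnKs mapsKs rho psd_rho.
have projP' := is_proj_compl projP; have projQ' := is_proj_compl projQ.
set P' := 1%:M - P; set Q' := 1%:M - Q; set sig := P' *m rho *m dag P'.
have Q'K_P' K : K \in Ks -> Q' *m K = Q' *m K *m P'.
  by move=> KKs; rewrite /P' mulmxBr mulmx1 (mapsKs K KKs) subr0.
(* the part of [krausmap Ks rho] outside [Q] only sees the part of [rho] outside [P] *)
have Q'_sandwich : Q' *m krausmap Ks rho *m dag Q' = Q' *m krausmap Ks sig *m dag Q'.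
  rewrite /krausmap !mulmx_sumr !mulmx_suml; apply: eq_big_seq => K KKs.
  have [P'P' hermP'] := projP'.
  have dagK' := congr1 (@dag R n n) (Q'K_P' K KKs); rewrite !dagM hermP' in dagK'.
  rewrite /sig !mulmxA (Q'K_P' K KKs) -!mulmxA dagK' hermP'.
  by rewrite !(mulmxA P' P') P'P'.
have : \tr (Q' *m krausmap Ks rho) <= \tr (P' *m rho).
  rewrite (mxtrace_proj_conj _ projQ') Q'_sandwich -(mxtrace_proj_conj _ projQ').
  rewrite (mxtrace_proj_conj _ projP') -/sig.
  apply: le_trans (tnKs _ (psd_conj _ psd_rho)).
  exact/mxtrace_proj_le/psd_krausmap/psd_conj.
rewrite /P' /Q' !mulmxBl !mul1mx !raddfB /= -subr_ge0 => le_compl.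
by rewrite -subr_ge0 (_ : _ - _ = \tr rho - \tr (P *m rho) - (\tr (krausmap Ks rho) - \tr (Q *m krausmap Ks rho))) //; ring.
Qed.

Hypothesis tot_bound :
  forall rho, is_pdens rho -> \tr (P *m rho) <= \tr (Q *m krausmap Ks rho).

Lemma tot_bound_maps_into : kraus_tnonincr Ks -> forall K, K \in Ks -> maps_into P Q K.
Proof.
move=> tnKs; apply: par_bound_maps_into => rho pdens_rho.
apply: le_trans (tot_bound pdens_rho) _; rewrite -addrA lerDl subr_ge0.
by apply: tnKs; case: pdens_rho.
Qed.

Lemma tot_bound_defect : kraus_tnonincr Ks -> defect Ks *m P = 0.
Proof.
move=> tnKs; apply: mx_col0P => v; rewrite -mulmxA.
set x := P *m v; have Px : P *m x = x by rewrite /x mulmxA; case: projP => ->.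
apply: psd_qform_eq0; [exact: psd_defect | exact: defect_herm |].
apply/eqP; rewrite eq_le psd_defect // andbT qform_defect subr_le0.
have := tot_bound (pdens_vdag x).
rewrite krausmapZ -!scalemxAr !mxtraceZ mxtrace_proj_vdag // ler_pM2l; last first.
  by rewrite invr_gt0 ltr_pwDl // sqnorm_ge0.
move/le_trans; apply; rewrite (mxtrace_proj_conj _ projQ) mxtrace_conj_krausmap_vdag.
rewrite mxtrace_krausmap_vdag; apply: ler_sum => K _.
by rewrite (sqnorm_proj_split (K *m x) projQ) -mulmxA lerDl sqnorm_ge0.
Qed.

End Correctness.

Section TotalCorrectness.
Variables (P Q : 'M[C]_n) (Ks : seq 'M[C]_n).
Hypotheses (projP : is_proj P) (projQ : is_proj Q).
Let P' := 1%:M - P.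

Lemma dual_proj_split K : maps_into P Q K ->
  dag K *m Q *m K = P *m (dag K *m K) *m P + P *m (dag K *m K) *m P'
    + P' *m (dag K *m K) *m P + dag (Q *m K *m P') *m (Q *m K *m P').
Proof.
move=> mapsK; have [QQ hermQ] := projQ; have [_ hermP] := projP.
have [_ hermP'] := is_proj_compl projP; rewrite -/P' in hermP'.
have QKP : Q *m K *m P = K *m P.
  by move: mapsK; rewrite /maps_into !mulmxBl mul1mx => /eqP; rewrite subr_eq0 => /eqP/esym.
have PKQ : P *m dag K *m Q = P *m dag K.
  by have := congr1 (@dag R n n) QKP; rewrite !dagM hermP hermQ mulmxA.
have t1 : P *m (dag K *m Q *m K) *m P = P *m (dag K *m K) *m P.
  by rewrite -!mulmxA (mulmxA Q K P) QKP.
have t2 : P *m (dag K *m Q *m K) *m P' = P *m (dag K *m K) *m P'.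
  by rewrite !mulmxA PKQ.
have t3 : P' *m (dag K *m Q *m K) *m P = P' *m (dag K *m K) *m P.
  by rewrite -!mulmxA (mulmxA Q K P) QKP.
have t4 : P' *m (dag K *m Q *m K) *m P' = dag (Q *m K *m P') *m (Q *m K *m P').
  by rewrite !dagM hermP' hermQ !mulmxA -(mulmxA _ Q Q) QQ.
have -> : dag K *m Q *m K = (P + P') *m (dag K *m Q *m K) *m (P + P').
  by rewrite /P' addrC subrK mul1mx mulmx1.
set X := dag K *m Q *m K.
rewrite (mulmxDl P P' X) (mulmxDl (P *m X)) (mulmxDr (P *m X) P P') (mulmxDr (P' *m X) P P').
by rewrite t1 t2 t3 t4 addrA.
Qed.

Hypothesis mapsKs : forall K, K \in Ks -> maps_into P Q K.
Hypothesis defectP : defect Ks *m P = 0.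

Lemma dual_proj_sum :
  \sum_(K <- Ks) dag K *m Q *m K = P + \sum_(K <- Ks) dag (Q *m K *m P') *m (Q *m K *m P').
Proof.
have [PP hermP] := projP; set S := \sum_(K <- Ks) dag K *m K.
have SP : S *m P = P.
  by move: defectP; rewrite /defect mulmxBl mul1mx => /eqP; rewrite subr_eq0 => /eqP/esym.
have PS : P *m S = P.
  have hermS : dag S = S by rewrite /S dag_sum; apply: eq_bigr => K _; rewrite dagM dagK.
  by have := congr1 (@dag R n n) SP; rewrite dagM hermP hermS.
rewrite (eq_big_seq _ (fun K KKs => dual_proj_split (mapsKs KKs))) !big_split /=.
rewrite -!mulmx_suml -!mulmx_sumr -/S PS -(mulmxA P' S) SP PP.
by rewrite /P' mulmxBr mulmxBl mulmx1 mul1mx PP subrr !addr0.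
Qed.

Lemma maps_into_tot_bound :
  forall rho, psd rho -> \tr (P *m rho) <= \tr (Q *m krausmap Ks rho).
Proof.
move=> rho psd_rho.
have -> : \tr (Q *m krausmap Ks rho) = \tr ((\sum_(K <- Ks) dag K *m Q *m K) *m rho).
  rewrite /krausmap mulmx_sumr mulmx_suml !raddf_sum; apply: eq_bigr => K _.
  by rewrite /= !mulmxA mxtrace_mulC !mulmxA.
rewrite dual_proj_sum mulmxDl mxtraceD lerDl mulmx_suml raddf_sum /= sumr_ge0 // => K _.
by rewrite -mulmxA mxtrace_mulC mxtrace_conj_ge0.
Qed.

End TotalCorrectness.

Lemma maps_into_rank1 v Q K : maps_into (rank1_proj v) Q K <-> Q *m (K *m v) = K *m v.
Proof.
rewrite -mulmx_compl_eq0 mulmxA; split => [mapsK|Kv0].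
  by rewrite -[v]rank1_projv mulmxA mapsK mul0mx.
by rewrite /maps_into -scalemxAr mulmxA Kv0 mul0mx scaler0.
Qed.

End KrausOperators.

Lemma kraus_tnonincr_of V (E : sop R V) Ks :
  kraus_of E Ks -> trace_nonincr E -> kraus_tnonincr Ks.
Proof. by move=> EKs tnE sig psd_sig; rewrite /krausmap -EKs; apply: tnE. Qed.

Lemma T_of_defect V (E : sop R V) Ks : kraus_of E Ks -> trace_nonincr E ->
  forall psi, T_of E psi <-> defect Ks *m psi = 0.
Proof.
move=> EKs tnE psi; rewrite defect_mulv_eq0; last exact: kraus_tnonincr_of EKs tnE.
by rewrite /T_of EKs.
Qed.

Lemma kraus_of_comp_proj V (E : sop R V) Ks (T : op R V) : kraus_of E Ks -> dag T = T ->
  kraus_of (fun A => E (T *m A *m T)) [seq K *m T | K <- Ks].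
Proof.
move=> EKs hermT A; rewrite EKs big_map; apply: eq_bigr => K _.
by rewrite dagM hermT !mulmxA.
Qed.

Section KrausExtension.
Variables (V X : {fset nat}).
Hypothesis VX : (V `<=` X)%fset.

Lemma ext_proj (P : op R V) : is_proj P -> is_proj (ext X P).
Proof. by case=> PP hermP; split; rewrite -?(ext_mulmx VX) -?ext_dag ?PP ?hermP. Qed.

Lemma ext_maps_into (P Q K : op R V) :
  maps_into P Q K -> maps_into (ext X P) (ext X Q) (ext X K).
Proof. by rewrite /maps_into -(ext1 VX) -linearB -!(ext_mulmx VX) => ->; rewrite linear0. Qed.

Lemma krausmap_ext (E : sop R V) Ks (rho : op R X) : kraus_of E Ks ->
  krausmap [seq ext X K | K <- Ks] rho = ext_sop E rho.
Proof. by move=> EKs; rewrite /krausmap big_map (ext_sop_kraus VX _ EKs). Qed.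

Lemma kraus_tnonincr_ext (E : sop R V) Ks : kraus_of E Ks -> trace_nonincr E ->
  kraus_tnonincr [seq ext X K | K <- Ks].
Proof. by move=> EKs tnE sig psd_sig; rewrite (krausmap_ext _ EKs) (ext_sop_tr_le VX). Qed.

Lemma defect_ext (Ks : seq (op R V)) : defect [seq ext X K | K <- Ks] = ext X (defect Ks).
Proof.
rewrite /defect big_map [RHS]linearB /= (ext1 VX) [in RHS]linear_sum /=; congr (_ - _).
by apply: eq_bigr => K _; rewrite (ext_mulmx VX) ext_dag.
Qed.

(* [\sum_(K <- Ks) sqnorm (Y *m ext X K *m x)] is a trace of [ext_sop E (x *m dag x)],
   so it does not depend on the Kraus representation [Ks] of [E]. *)
Lemma kraus_annihilate_transfer (E : sop R V) Ks1 Ks2 (Y : op R X) (x : ket R X) :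
  kraus_of E Ks1 -> kraus_of E Ks2 ->
  (forall K, K \in Ks1 -> Y *m ext X K *m x = 0) ->
  forall K, K \in Ks2 -> Y *m ext X K *m x = 0.
Proof.
move=> EKs1 EKs2 Ks1_0; apply: (sqnorms_eq0 (f := fun K => Y *m ext X K *m x)).
have sum_ext Ks : kraus_of E Ks ->
    \sum_(K <- Ks) sqnorm (Y *m ext X K *m x) = \tr (Y *m ext_sop E (x *m dag x) *m dag Y).
  by move=> EKs; rewrite -(krausmap_ext _ EKs) mxtrace_conj_krausmap_vdag big_map.
rewrite sum_ext // -(sum_ext _ EKs1) big_seq big1 // => K KKs1.
by rewrite Ks1_0 // sqnorm0.
Qed.

End KrausExtension.

(** * Spans and the separating vector *)

Section Spans.
Variable V : {fset nat}.
Implicit Types (S Z : op R V -> Prop) (GG : sop R V -> Prop).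

Lemma lin_span_ind S Z : Z 0 -> (forall a b, Z a -> Z b -> Z (a + b)) ->
  (forall c a, Z a -> Z (c *: a)) -> (forall B, S B -> Z B) ->
  forall A, lin_span S A -> Z A.
Proof.
move=> Z0 ZD ZZ SZ A [cs [cs_S ->]]; rewrite big_seq.
by apply: (big_ind Z) => // p p_cs; apply/ZZ/SZ/cs_S.
Qed.

Lemma lin_span_gen S B : S B -> lin_span S B.
Proof.
move=> SB; exists [:: (1, B)]; split; last by rewrite big_seq1 scale1r.
by move=> p; rewrite inE => /eqP ->.
Qed.

Lemma lin_span0 S : lin_span S 0.
Proof. by exists [::]; rewrite big_nil. Qed.

Lemma lin_spanD S a b : lin_span S a -> lin_span S b -> lin_span S (a + b).
Proof.
move=> [cs1 [cs1_S ->]] [cs2 [cs2_S ->]]; exists (cs1 ++ cs2); split; last by rewrite big_cat.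
by move=> p; rewrite mem_cat => /orP [/cs1_S|/cs2_S].
Qed.

Lemma lin_spanZ S c a : lin_span S a -> lin_span S (c *: a).
Proof.
move=> [cs [cs_S ->]]; exists [seq (c * p.1, p.2) | p <- cs]; split.
  by move=> q /mapP [p p_cs ->] /=; exact: cs_S.
by rewrite big_map scaler_sumr; apply: eq_bigr => p _; rewrite scalerA.
Qed.

Lemma join_span_ind GG Z : Z 0 -> (forall a b, Z a -> Z b -> Z (a + b)) ->
  (forall c a, Z a -> Z (c *: a)) ->
  (forall G Ks K, GG G -> kraus_of G Ks -> K \in Ks -> Z K) ->
  forall A, join_span GG A -> Z A.
Proof.
move=> Z0 ZD ZZ krausZ; apply: lin_span_ind => // B [G [GG_G [Ks [GKs]]]].
by apply: lin_span_ind => // K KKs; exact: krausZ GG_G GKs KKs.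
Qed.

Lemma join_span_kraus GG G Ks K : GG G -> kraus_of G Ks -> K \in Ks -> join_span GG K.
Proof.
move=> GG_G GKs KKs; apply: lin_span_gen; exists G; split => //.
by exists Ks; split => //; exact: lin_span_gen.
Qed.

Lemma join_span_mono GG1 GG2 A :
  (forall G, GG1 G -> GG2 G) -> join_span GG1 A -> join_span GG2 A.
Proof.
move=> sub12 [cs [cs_gen ->]]; exists cs; split => // p /cs_gen [G [GG1_G spanG]].
by exists G; split => //; exact: sub12.
Qed.

Lemma join_span_annihilate GG X (L M : op R X) : (V `<=` X)%fset ->
  (forall G Ks K, GG G -> kraus_of G Ks -> K \in Ks -> L *m ext X K *m M = 0) ->
  forall A, join_span GG A -> L *m ext X A *m M = 0.
Proof.
move=> VX; apply: join_span_ind.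
- by rewrite linear0 mulmx0 mul0mx.
- by move=> a b La Lb; rewrite linearD /= mulmxDr mulmxDl La Lb addr0.
- by move=> c a La; rewrite linearZ /= -scalemxAr -scalemxAl La scaler0.
Qed.

End Spans.

Section SubspaceProjector.
Variables (n : nat) (S : 'cV[C]_n -> Prop).
Hypotheses (S0 : S 0) (SD : forall x y, S x -> S y -> S (x + y)).
Hypothesis SZ : forall c x, S x -> S (c *: x).

Let Srow (y : 'rV[C]_n) := S y^T.

Let Srow_comb m (A : 'M[C]_(m, n)) y : (forall i, Srow (row i A)) -> (y <= A)%MS -> Srow y.
Proof.
move=> rowsA /submxP [w ->]; rewrite mulmx_sum_row /Srow.
apply: (big_ind (fun z : 'rV_n => S z^T)); first by rewrite trmx0.
  by move=> z1 z2 Sz1 Sz2; rewrite linearD /=; apply: SD.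
by move=> i _; rewrite linearZ /=; apply/SZ/rowsA.
Qed.

Let Srow_basis : exists U : 'M[C]_n, (forall i, Srow (row i U)) /\ forall y, Srow y -> (y <= U)%MS.
Proof.
suff grow k (U : 'M[C]_n) : (forall i, Srow (row i U)) -> (n - \rank U <= k)%N ->
    exists U' : 'M[C]_n, (forall i, Srow (row i U')) /\ forall y, Srow y -> (y <= U')%MS.
  by apply: (grow n 0); rewrite ?leq_subr // => i; rewrite row0 /Srow trmx0.
elim: k U => [|k IHk] U rowsU codimU.
  exists U; split => // y _; apply: submx_full.
  by rewrite /row_full eqn_leq rank_leq_col /= -subn_eq0 -leqn0.
have [[y [Sy y_notin]]|all_in] := classic (exists y, Srow y /\ ~~ (y <= U)%MS); last first.
  exists U; split => // y Sy; case: (boolP (y <= U)%MS) => // y_notin.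
  by case: all_in; exists y.
apply: (IHk (U + y)%MS).
  move=> i; have /sub_addsmxP [[u1 u2] /= ->] := row_sub i (U + y)%MS.
  rewrite /Srow linearD /=; apply: SD; first exact: Srow_comb rowsU (submxMl _ _).
  have -> : u2 *m y = u2 0 0 *: y by apply/matrixP => a b; rewrite (ord1 a) !mxE big_ord1.
  by rewrite linearZ /=; apply: SZ.
have : (U < U + y)%MS.
  rewrite ltmxE addsmxSl /=; apply: contra y_notin.
  exact: submx_trans (addsmxSr U y).
move/rank_ltmx; have := rank_leq_col (U + y)%MS; lia.
Qed.

Lemma proj_subspace : exists Q : 'M[C]_n, is_proj Q /\ forall x, Q *m x = x <-> S x.
Proof.
have [U [rowsU S_U]] := Srow_basis.
set B := row_base U; set Cm := B^T; set G := dag Cm *m Cm.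
have G_inj (z : 'rV[C]_(\rank U)) : z *m G = 0 -> z = 0.
  move=> zG0; have /sqnorm_eq0 Cz0 : sqnorm (Cm *m dag z) = 0.
    by rewrite /sqnorm dagM dagK !mulmxA -(mulmxA z) zG0 !mul0mx mxE.
  have : (dag z)^T *m B = 0 by rewrite -[B]trmxK -trmx_mul Cz0 trmx0.
  move/eqP; rewrite mulmx_free_eq0 ?row_base_free // => /eqP z0.
  by rewrite -[z]dagK -[dag z]trmxK z0 trmx0 /dag map_mx0 trmx0.
have G_unit : G \in unitmx.
  rewrite -row_free_unit -kermx_eq0; apply/eqP/row_matrixP => i; rewrite row0.
  by apply: G_inj; rewrite -row_mul mulmx_ker row0.
have hermG : dag G = G by rewrite /G dagM dagK.
have dag_invG : dag (invmx G) = invmx G by rewrite /dag map_invmx trmx_inv -/(dag G) hermG.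
exists (Cm *m invmx G *m dag Cm); split.
  split; last by rewrite !dagM dagK dag_invG !mulmxA.
  by rewrite !mulmxA -(mulmxA _ (dag Cm) Cm) -/G -(mulmxA Cm (invmx G) G) (mulVmx G_unit) mulmx1.
move=> x; split => [<-|Sx].
  rewrite -[X in S X]trmxK; apply: (Srow_comb rowsU).
  by rewrite -!mulmxA trmx_mul trmxK (submx_trans (submxMl _ _)) // eq_row_base.
have /submxP [D xB] : (x^T <= B)%MS by rewrite eq_row_base; apply: S_U; rewrite /Srow trmxK.
have -> : x = Cm *m D^T by rewrite -[x]trmxK xB trmx_mul.
by rewrite -!mulmxA (mulmxA (dag Cm)) -/G (mulmxA (invmx G)) (mulVmx G_unit) mul1mx.
Qed.

End SubspaceProjector.

(* The maximally entangled vector [\sum_u |u>_V |u>_V'] with [V'] a disjoint shifted copy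
   of [V]: its slices along [V] are all the basis vectors of [H_V]. *)
Lemma separating_vector V : exists X (psi : ket R X),
  (V `<=` X)%fset /\ forall A : op R V, ext X A *m psi = 0 -> A = 0.
Proof.
pose m := (\max_(v : V) val v).+1.
have ltm v : v \in V -> (v < m)%N.
  by move=> vV; rewrite ltnS; exact: (@leq_bigmax _ (fun v : V => val v) (FSetSub vV)).
pose X := (V `|` [fset (v + m)%N | v in V])%fset.
have VX : (V `<=` X)%fset by rewrite fsubsetUl.
have shiftX v : v \in V -> (v + m)%N \in X.
  by move=> vV; rewrite in_fsetU; apply/orP; right; apply/imfsetP; exists v.
have shift_notin v : (v + m)%N \notin V.
  by apply/negP => /ltm; rewrite ltnNge leq_addl.
pose copy (s : basis X) : basis V := [ffun v : V => asg s (val v + m)].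
pose psi : ket R X := mkket (fun s => (restr V s == copy s)%:R).
pose e (u : basis V) : ket R V := mkket (fun w => (w == u)%:R).
exists X, psi; split => // A Apsi0.
have copy_merge (w : basis V) r : copy (Defs.merge w r) = copy r.
  by apply/ffunP => v; rewrite !ffunE (asg_merge VX) (negbTE (shift_notin _)).
have slice_psi r : slice V r psi = e (copy r).
  by apply: ketP => w; rewrite !kent_mkket (restr_merge VX) copy_merge.
have copy_surj u : exists r, copy r = u.
  exists [ffun x : X => asg u (val x - m)%N]; apply/ffunP => v.
  have vX := shiftX _ (fsvalP v).
  by rewrite ffunE -[(val v + m)%N]/(val (FSetSub vX)) asg_val ffunE /= addnK asg_val.
have Ae0 u : A *m e u = 0.
  have [r <-] := copy_surj u.
  by rewrite -slice_psi -(slice_ext VX) Apsi0; apply: ketP => w; rewrite kent_mkket !kent0.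
apply: opP => s u; have := congr1 (fun z => kent z s) (Ae0 u).
rewrite kent_mulmx kent0 (bigD1 u) //= kent_mkket eqxx mulr1 big1 ?addr0 => [->|w wu].
  by rewrite /ent mxE.
by rewrite kent_mkket (negbTE wu) mulr0.
Qed.

Lemma lin_span_witness V (S : op R V -> Prop) : exists X (psi : ket R X) (Q : op R X),
  [/\ (V `<=` X)%fset, is_proj Q &
      forall A, Q *m (ext X A *m psi) = ext X A *m psi <-> lin_span S A].
Proof.
have [X [psi [VX sep]]] := separating_vector V.
pose SX (x : ket R X) := exists A, lin_span S A /\ x = ext X A *m psi.
have [Q [projQ rangeQ]] : exists Q, is_proj Q /\ forall x, Q *m x = x <-> SX x.
  apply: proj_subspace.
  - by exists 0; split; [exact: lin_span0 | rewrite linear0 mul0mx].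
  - move=> _ _ [a [Sa ->]] [b [Sb ->]]; exists (a + b); split; first exact: lin_spanD.
    by rewrite linearD /= mulmxDl.
  - move=> c _ [a [Sa ->]]; exists (c *: a); split; first exact: lin_spanZ.
    by rewrite linearZ /= scalemxAl.
exists X, psi, Q; split => // A; rewrite rangeQ; split => [[A' [SA' eqA]]|SA]; last by exists A.
suff -> : A = A' by [].
by apply/eqP; rewrite -subr_eq0; apply/eqP/sep; rewrite linearB /= mulmxBl eqA subrr.
Qed.

(** * Satisfaction and refinement *)

Section Satisfaction.
Variables (V : {fset nat}) (GG : sop R V -> Prop).
Hypothesis DProgGG : forall G, GG G -> DProg G.

Section Bounds.
Variables (W : {fset nat}) (P Q : op R W).
Hypotheses (projP : is_proj P) (projQ : is_proj Q).

Lemma par_sat_kraus : par_sat GG P Q <->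
  forall X, (V `|` W `<=` X)%fset -> forall G Ks K, GG G -> kraus_of G Ks -> K \in Ks ->
    maps_into (ext X P) (ext X Q) (ext X K).
Proof.
split => [sat X VWX G Ks K GG_G GKs KKs|mapsKs X VWX rho pdens_rho G GG_G];
  move: (VWX); rewrite fsubUset => /andP [VX WX].
  apply: (par_bound_maps_into (ext_proj WX projP) (ext_proj WX projQ) _ (map_f _ KKs)).
  by move=> rho pdens_rho; rewrite (krausmap_ext VX _ GKs); exact: sat.
have [[Ks GKs] tnG] := DProgGG GG_G; rewrite -(krausmap_ext VX _ GKs).
apply: maps_into_par_bound; [exact: ext_proj|exact: ext_proj|exact: kraus_tnonincr_ext| |].
  by move=> _ /mapP [K KKs ->]; exact: mapsKs GG_G GKs KKs.
by case: pdens_rho.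
Qed.

Lemma tot_sat_kraus : tot_sat GG P Q <->
  forall X, (V `|` W `<=` X)%fset -> forall G Ks, GG G -> kraus_of G Ks ->
    (forall K, K \in Ks -> maps_into (ext X P) (ext X Q) (ext X K)) /\
    ext X (defect Ks) *m ext X P = 0.
Proof.
split => [sat X VWX G Ks GG_G GKs|maps_defect X VWX rho pdens_rho G GG_G];
  move: (VWX); rewrite fsubUset => /andP [VX WX].
  have [_ tnG] := DProgGG GG_G.
  have projPX := ext_proj WX projP; have projQX := ext_proj WX projQ.
  have tnKs := kraus_tnonincr_ext VX GKs tnG.
  have bound rho : is_pdens rho ->
      \tr (ext X P *m rho) <= \tr (ext X Q *m krausmap [seq ext X K | K <- Ks] rho).
    by move=> pdens_rho; rewrite (krausmap_ext VX _ GKs); exact: sat.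
  split; first by move=> K KKs; exact: tot_bound_maps_into projPX projQX bound tnKs _ (map_f _ KKs).
  by rewrite -(defect_ext VX); exact: tot_bound_defect projPX projQX bound tnKs.
have [[Ks GKs] _] := DProgGG GG_G; have [mapsKs defectP] := maps_defect X VWX G Ks GG_G GKs.
rewrite -(krausmap_ext VX _ GKs).
apply: maps_into_tot_bound; [exact: ext_proj|exact: ext_proj| |by rewrite (defect_ext VX)|].
  by move=> _ /mapP [K KKs ->]; exact: mapsKs.
by case: pdens_rho.
Qed.

End Bounds.

Section Local.
Variables (X : {fset nat}) (P Q : op R X).
Hypotheses (VX : (V `<=` X)%fset) (projP : is_proj P) (projQ : is_proj Q).

Let VXX : (V `|` X `<=` X)%fset.
Proof. by rewrite fsubUset VX fsubset_refl. Qed.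

Lemma par_sat_local : par_sat GG P Q <->
  forall G Ks K, GG G -> kraus_of G Ks -> K \in Ks -> maps_into P Q (ext X K).
Proof.
rewrite (par_sat_kraus projP projQ); split => [mapsKs G Ks K GG_G GKs KKs|].
  by have := mapsKs X VXX G Ks K GG_G GKs KKs; rewrite !ext_id.
move=> mapsKs X' + G Ks K GG_G GKs KKs; rewrite fsubUset => /andP [_ XX'].
by rewrite -(ext_ext K VX XX'); apply: (ext_maps_into XX'); exact: mapsKs GG_G GKs KKs.
Qed.

Lemma tot_sat_local : tot_sat GG P Q <->
  forall G Ks, GG G -> kraus_of G Ks ->
    (forall K, K \in Ks -> maps_into P Q (ext X K)) /\ ext X (defect Ks) *m P = 0.
Proof.
rewrite (tot_sat_kraus projP projQ); split => [sat G Ks GG_G GKs|].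
  by have := sat X VXX G Ks GG_G GKs; rewrite !ext_id.
move=> sat X' + G Ks GG_G GKs; rewrite fsubUset => /andP [_ XX'].
have [mapsKs defectP] := sat G Ks GG_G GKs; split.
  by move=> K KKs; rewrite -(ext_ext K VX XX'); apply: (ext_maps_into XX'); exact: mapsKs.
by rewrite -(ext_ext _ VX XX') -(ext_mulmx XX') defectP linear0.
Qed.

End Local.
End Satisfaction.

Lemma NProg_DProg V (GG : sop R V -> Prop) : NProg GG -> forall G, GG G -> DProg G.
Proof. by case. Qed.

Section Refinement.
Variables (V : {fset nat}) (EE FF : sop R V -> Prop).
Hypotheses (DProgEE : forall E, EE E -> DProg E) (DProgFF : forall F, FF F -> DProg F).

Lemma refP_of_join_span_sub :
  (forall A, join_span FF A -> join_span EE A) -> refP EE FF.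
Proof.
move=> spanFE W P Q projP projQ.
rewrite (par_sat_kraus DProgEE projP projQ) (par_sat_kraus DProgFF projP projQ).
move=> mapsE X VWX F Bs B FF_F FBs BBs; move: (VWX); rewrite fsubUset => /andP [VX _].
apply: (join_span_annihilate (GG := EE) VX) => [E Ks K EE_E EKs KKs|].
  exact: mapsE VWX E Ks K EE_E EKs KKs.
by apply: spanFE; exact: join_span_kraus FF_F FBs BBs.
Qed.

Lemma join_span_sub_of_refP : refP EE FF -> forall A, join_span FF A -> join_span EE A.
Proof.
move=> refEF.
have [X [psi [Q [VX projQ rangeQ]]]] :=
  lin_span_witness (fun B => exists E, EE E /\ kraus_span E B).
have projP := is_proj_rank1 psi.
have satE : par_sat EE (rank1_proj psi) Q.
  apply/(par_sat_local DProgEE VX projP projQ) => E Ks K EE_E EKs KKs.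
  by apply/maps_into_rank1/rangeQ; exact: join_span_kraus EE_E EKs KKs.
move/(par_sat_local DProgFF VX projP projQ): (refEF X _ Q projP projQ satE) => mapsF.
apply: join_span_ind; [exact: lin_span0|exact: lin_spanD|exact: lin_spanZ|].
by move=> F Bs B FF_F FBs BBs; apply/rangeQ/maps_into_rank1; exact: mapsF FF_F FBs BBs.
Qed.

Section ProjectorT.
Variable TE : op R V.
Hypotheses (projTE : is_proj TE) (TE_spec : forall psi, T_set EE psi <-> TE *m psi = psi).

Let hermTE : dag TE = TE. Proof. by case: projTE. Qed.

Lemma defect_mul_TE (GG : sop R V -> Prop) G Ks :
  (forall psi, T_set EE psi -> T_set GG psi) -> GG G -> DProg G -> kraus_of G Ks ->
  defect Ks *m TE = 0.
Proof.
move=> sub_T GG_G [_ tnG] GKs; apply: mx_col0P => v; rewrite -mulmxA.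
apply/(T_of_defect GKs tnG)/(sub_T _ _ G GG_G)/TE_spec.
by rewrite mulmxA; case: projTE => ->.
Qed.

Lemma comp_proj_annihilate (GG : sop R V -> Prop) X k (L : op R X) (M : 'M[C]_(Defs.dim X, k)) :
  (V `<=` X)%fset -> (forall G, GG G -> DProg G) ->
  (forall G Ks K, GG G -> kraus_of G Ks -> K \in Ks -> L *m ext X K *m (ext X TE *m M) = 0) ->
  forall G' Ks' K', comp_proj GG TE G' -> kraus_of G' Ks' -> K' \in Ks' ->
    L *m ext X K' *m M = 0.
Proof.
move=> VX DProgGG annihil _ Ks' K' [G [GG_G ->]] G'Ks' K'Ks'.
have [[Ks GKs] _] := DProgGG G GG_G; apply: mx_col0P => v; rewrite -mulmxA.
apply: (kraus_annihilate_transfer VX (kraus_of_comp_proj GKs hermTE) G'Ks') => // _ /mapP [K KKs ->].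
by rewrite (ext_mulmx VX) !mulmxA -(mulmxA _ (ext X TE)) (annihil G Ks K) ?mul0mx.
Qed.

Lemma T_set_sub_of_refT : refT EE FF -> forall psi, T_set EE psi -> T_set FF psi.
Proof.
move=> refEF psi Epsi.
have VV : (V `<=` V)%fset := fsubset_refl V.
have projP := is_proj_rank1 psi; have proj1 := is_proj1 (Defs.dim V).
have satE : tot_sat EE (rank1_proj psi) 1%:M.
  apply/(tot_sat_local DProgEE VV projP proj1) => E Ks EE_E EKs; split.
    by move=> K _; rewrite /maps_into subrr !mul0mx.
  have [_ tnE] := DProgEE EE_E.
  by rewrite ext_id -scalemxAr mulmxA (T_of_defect EKs tnE _).1 ?mul0mx ?scaler0 //; exact: Epsi.
move/(tot_sat_local DProgFF VV projP proj1): (refEF V _ _ projP proj1 satE) => satF F FF_F.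
have [[Bs FBs] tnF] := DProgFF FF_F; apply/(T_of_defect FBs tnF).
have [_] := satF F Bs FF_F FBs; rewrite ext_id => defectP.
by rewrite -[psi]rank1_projv mulmxA defectP mul0mx.
Qed.

Lemma comp_span_sub_of_refT : refT EE FF ->
  forall A, join_span (comp_proj FF TE) A -> join_span (comp_proj EE TE) A.
Proof.
move=> refEF.
have [X [psi [Q [VX projQ rangeQ]]]] :=
  lin_span_witness (fun B => exists G, comp_proj EE TE G /\ kraus_span G B).
set phi := ext X TE *m psi; have projP := is_proj_rank1 phi.
have satE : tot_sat EE (rank1_proj phi) Q.
  apply/(tot_sat_local DProgEE VX projP projQ) => E Ks EE_E EKs; split.
    move=> K KKs; apply/maps_into_rank1; rewrite /phi (mulmxA (ext X K)) -(ext_mulmx VX); apply/rangeQ.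
    apply: (join_span_kraus (G := fun A => E (TE *m A *m TE))); first by exists E.
      exact: kraus_of_comp_proj EKs hermTE.
    exact: map_f.
  rewrite -scalemxAr mulmxA /phi mulmxA -(ext_mulmx VX).
  by rewrite (defect_mul_TE (fun _ => id) EE_E (DProgEE EE_E) EKs) linear0 !mul0mx scaler0.
move/(tot_sat_local DProgFF VX projP projQ): (refEF X _ Q projP projQ satE) => satF.
apply: join_span_ind; [exact: lin_span0|exact: lin_spanD|exact: lin_spanZ|].
move=> G' Ks' K' compG' G'Ks' K'Ks'; apply/rangeQ; apply/mulmx_compl_eq0; rewrite mulmxA.
apply: (comp_proj_annihilate VX DProgFF _ compG' G'Ks' K'Ks') => F Bs B FF_F FBs BBs.
have [mapsF _] := satF F Bs FF_F FBs.
by rewrite -mulmxA; apply/mulmx_compl_eq0/maps_into_rank1; exact: mapsF.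
Qed.

Lemma refT_of_T_set_sub : (forall psi, T_set EE psi -> T_set FF psi) ->
  (forall A, join_span (comp_proj FF TE) A -> join_span (comp_proj EE TE) A) ->
  refT EE FF.
Proof.
move=> sub_T span_sub W P Q projP projQ.
rewrite (tot_sat_kraus DProgEE projP projQ) (tot_sat_kraus DProgFF projP projQ).
move=> satE X VWX F Bs FF_F FBs; move: (VWX); rewrite fsubUset => /andP [VX _].
(* the slices of every vector in the range of [ext X P] are annihilated by all defects of [EE] *)
have TE_P : ext X TE *m ext X P = ext X P.
  apply: mx_colP => v; rewrite -mulmxA; apply: (slice_inj VX) => r.
  rewrite (slice_ext VX); apply/TE_spec => E EE_E.
  have [[Ks EKs] tnE] := DProgEE EE_E; apply/(T_of_defect EKs tnE).
  by rewrite -(slice_ext VX) mulmxA (satE X VWX E Ks EE_E EKs).2 mul0mx slice0.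
split => [B BBs|]; last first.
  rewrite -TE_P mulmxA -(ext_mulmx VX).
  by rewrite (defect_mul_TE sub_T FF_F (DProgFF FF_F) FBs) linear0 mul0mx.
rewrite /maps_into -TE_P mulmxA -(mulmxA _ (ext X B)) -(ext_mulmx VX).
apply: (join_span_annihilate VX); last first.
  apply: span_sub; apply: (join_span_kraus (G := fun A => F (TE *m A *m TE))).
  - by exists F.
  - exact: kraus_of_comp_proj FBs hermTE.
  - exact: map_f.
apply: (comp_proj_annihilate VX DProgEE) => E Ks K EE_E EKs KKs.
by rewrite TE_P; exact: (satE X VWX E Ks EE_E EKs).1.
Qed.

End ProjectorT.

Let join_span_comp_proj1 (GG : sop R V -> Prop) A :
  join_span (comp_proj GG 1%:M) A <-> join_span GG A.
Proof.
have comp1 G : (fun A => G (1%:M *m A *m 1%:M)) = G.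
  by apply: functional_extensionality => B; rewrite mul1mx mulmx1.
split; apply: join_span_mono => G; first by case=> G' [GG_G' ->]; rewrite comp1.
by move=> GG_G; exists G; rewrite comp1.
Qed.

Lemma refT_iff_refP : (forall E, EE E -> trace_pres E) -> (forall F, FF F -> trace_pres F) ->
  refT EE FF <-> refP EE FF.
Proof.
move=> tpE tpF.
have T_set_all (GG : sop R V -> Prop) : (forall G, GG G -> trace_pres G) -> forall psi, T_set GG psi.
  by move=> tpGG psi G /tpGG; exact.
have TE_spec psi : T_set EE psi <-> 1%:M *m psi = psi.
  by rewrite mul1mx; split => // _; exact: T_set_all.
have proj1 := is_proj1 (Defs.dim V).
split => [refEF|refEF].
  apply: refP_of_join_span_sub => A /join_span_comp_proj1 /(comp_span_sub_of_refT proj1 TE_spec refEF).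
  by move/join_span_comp_proj1.
apply: (refT_of_T_set_sub proj1 TE_spec) => [psi _|A]; first exact: T_set_all.
by rewrite !join_span_comp_proj1; exact: join_span_sub_of_refP.
Qed.

End Refinement.
End Quantum.

Theorem theorem5p8 (R : realType) (V : {fset nat}) (EE FF : sop R V -> Prop) :
  NProg EE -> NProg FF ->
  (* (1) *)
  (refP EE FF <->
     (forall A, join_span FF A -> join_span EE A)) /\
  (* (2): TE is the projector onto the subspace T_EE *)
  (forall TE : op R V, is_proj TE -> (forall psi, T_set EE psi <-> TE *m psi = psi) ->
     (refT EE FF <->
        ((forall psi, T_set EE psi -> T_set FF psi) /\
         (forall A, join_span (comp_proj FF TE) A -> join_span (comp_proj EE TE) A)))) /\
  (* (3) *)
  ((forall E, EE E -> trace_pres E) -> (forall F, FF F -> trace_pres F) ->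
     (refT EE FF <-> refP EE FF)).
Proof.
move=> /NProg_DProg DProgEE /NProg_DProg DProgFF.
split; first by split; [exact: join_span_sub_of_refP | exact: refP_of_join_span_sub].
split; last exact: refT_iff_refP.
move=> TE projTE TE_spec; split => [refEF|[]]; last exact: refT_of_T_set_sub.
by split; [exact: T_set_sub_of_refT | exact: comp_span_sub_of_refT].
Qed.
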